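(* For $1\le k\le n$ let $U^k=U^{\Phi_k\times\Psi}$ and $\widetilde U^k=U^{\widetilde\Phi_k\times\Psi}$ (so $\widetilde U^k\subset U^k$), and let $F^k$ be the orthogonal complement of $\widetilde U^k$ in $U^k$ (with respect to the standard inner product on $\mathbb{R}^{S_n}$). Then the subspaces $F^k$, $2\le k\le n$, are pairwise orthogonal, and each is orthogonal to the all-ones vector $\mathbf{1}$.
   Context: $S_n$ is the group of permutations of $\{1,\ldots,n\}$. For partitions $\mathcal{R}=(R_i)$, $\mathcal{C}=(C_j)$ of $\{1,\ldots,n\}$, the product partition $\mathcal{B}=\mathcal{R}\times\mathcal{C}=(R_i\times C_j)$ has marginal $|\pi_{\mathcal{B}}|=(t_{ij})$, $t_{ij}=|\{s:(s,\pi(s))\in R_i\times C_j\}|$; $U^{\mathcal{B}}=\{v\in\mathbb{R}^{S_n}: |\pi_{\mathcal{B}}|=|\sigma_{\mathcal{B}}|\Rightarrow v(\pi)=v(\sigma)\}$. Bold sections: $\Phi_k=(\{1,\ldots,k-1\},\{k\},\{k+1,\ldots,n\})$, $1\le k\le n$ (empty blocks omitted). Thin sections: $\widetilde\Phi_k=(\{1,\ldots,k\},\{k+1,\ldots,n\})$ for $1\le k\le n-1$, and $\widetilde\Phi_n=(\{1,\ldots,n\})$. Full partition: $\Psi=(\{1\},\ldots,\{n\})$. *)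

From HB Require Import structures.
From mathcomp Require Import all_boot all_order all_algebra all_fingroup.
Set Implicit Arguments. Unset Strict Implicit. Unset Printing Implicit Defensive.
Import Order.TTheory GRing.Theory Num.Theory.

(* Points {1,...,n} are represented by 'I_n = {0,...,n-1}: s : 'I_n stands for
   the paper's point s+1.  S_n is 'S_n = {perm 'I_n}.
   A partition of {1..n} is represented by a block-labelling function
   'I_n -> nat (blocks = nonempty fibres; empty blocks are thus automatically
   omitted). *)

Definition partition_lab (n : nat) := 'I_n -> nat.

Definition marginal (n : nat) (Rl Cl : partition_lab n) (pi : 'S_n) (i j : nat) : nat :=
  #|[set s : 'I_n | (Rl s == i) && (Cl (pi s) == j)]|.

Definition inU (R : realFieldType) (n : nat) (Rl Cl : partition_lab n)
  (v : 'S_n -> R) : Prop :=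
  forall pi sigma : 'S_n,
    (forall i j, marginal Rl Cl pi i j = marginal Rl Cl sigma i j) ->
    v pi = v sigma.

Definition dotS (R : realFieldType) (n : nat) (v w : 'S_n -> R) : R :=
  \sum_(pi : 'S_n) v pi * w pi.

(* Bold section Phi_k = ({1..k-1},{k},{k+1..n}) *)
Definition Phi (n k : nat) : partition_lab n :=
  fun s => if (s.+1 < k)%N then 0%N else if s.+1 == k then 1%N else 2%N.

(* Thin section tilde Phi_k = ({1..k},{k+1..n})  (for k = n: a single block) *)
Definition Phit (n k : nat) : partition_lab n :=
  fun s => if (s.+1 <= k)%N then 0%N else 1%N.

Definition Psi (n : nat) : partition_lab n := fun s => nat_of_ord s.

Definition inUk (R : realFieldType) (n k : nat) (v : 'S_n -> R) : Prop :=
  @inU R n (@Phi n k) (@Psi n) v.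
Definition inUtk (R : realFieldType) (n k : nat) (v : 'S_n -> R) : Prop :=
  @inU R n (@Phit n k) (@Psi n) v.

Definition inF (R : realFieldType) (n k : nat) (v : 'S_n -> R) : Prop :=
  @inUk R n k v /\ (forall w : 'S_n -> R, @inUtk R n k w -> @dotS R n v w = 0%R).

From HB Require Import structures.
From mathcomp Require Import all_boot all_order all_algebra all_fingroup.
Import Order.TTheory GRing.Theory Num.Theory.
Set Implicit Arguments. Unset Strict Implicit. Unset Printing Implicit Defensive.
Local Open Scope ring_scope.

(* With the full partition Psi as column partition, a vector v
   lies in U^{R x Psi} iff it is invariant under left translation by every
   permutation preserving the blocks of R (inU_PsiP).  Write L_k = {s < k}
   (the paper's points 1..k) and H_k for its complement.

   Let k < l, v in F^k and w in U^l.  Since v in U^k, v is invariant under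
   Sym H_k; since k < l, w is invariant under Sym L_k.  Average w over
   Sym H_k to obtain w'.  Every permutation preserving L_k factors as an
   element of Sym L_k times an element of Sym H_k (perm_split), and these
   two groups commute, so w' lies in tilde U^k (average_invariant) and is
   therefore orthogonal to v.  On the other hand <v, w'> = |Sym H_k| <v, w>
   by the invariance of v (dotS_average), whence <v, w> = 0.  Applied to
   w in F^l (in particular w in U^l) this gives pairwise orthogonality; the
   constant vector 1 lies in every tilde U^k, giving the second claim. *)

Section PermutationFacts.
Variable T : finType.

Lemma Sym_preserves_lab (rT : Type) (lab : T -> rT) (A : {set T}) (u : {perm T}) :
  {in A &, forall x y, lab x = lab y} -> u \in Sym A -> forall x, lab (u x) = lab x.
Proof.
move=> labA; rewrite inE => uA x.
have [xA | xNA] := boolP (x \in A); last by rewrite (out_perm uA xNA).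
by apply: labA; rewrite ?perm_closed.
Qed.

Lemma perm_split (S : {set T}) (g : {perm T}) :
  (forall x, (g x \in S) = (x \in S)) ->
  exists2 a, a \in Sym S & exists2 b, b \in Sym (~: S) & g = (a * b)%g.
Proof.
move=> gS.
have b_inj : injective (fun x => if x \in S then x else g x).
  move=> x y; case: ifPn => xS; case: ifPn => yS //.
  - by move=> eq_xy; move: yS; rewrite -gS -eq_xy xS.
  - by move=> eq_xy; move: xS; rewrite -gS eq_xy yS.
  - exact: perm_inj.
pose b := perm b_inj.
have bS x : x \notin S -> b x = g x by rewrite permE /= => /negbTE ->.
exists (g * b^-1)%g; last first.
  exists b; last by rewrite mulgKV.
  rewrite inE; apply/subsetP => x; rewrite !inE permE /=.
  by case: ifPn; rewrite ?eqxx.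
rewrite inE; apply/subsetP => x; rewrite inE; apply: contraR => xNS.
by rewrite permM -(bS _ xNS) permK.
Qed.

End PermutationFacts.

Section Invariance.
Variable n : nat.

Definition preserves (Rl : partition_lab n) (h : 'S_n) : Prop :=
  forall s, Rl (h s) = Rl s.

Lemma marginal_preserves (Rl Cl : partition_lab n) (h pi : 'S_n) :
  preserves Rl h -> forall i j, marginal Rl Cl (h * pi)%g i j = marginal Rl Cl pi i j.
Proof.
move=> Hh i j; rewrite /marginal.
have -> : [set s | (Rl s == i) && (Cl ((h * pi)%g s) == j)] =
          h @^-1: [set t | (Rl t == i) && (Cl (pi t) == j)].
  by apply/setP => s; rewrite !inE permM Hh.
by rewrite card_preimset //; exact: perm_inj.
Qed.

Lemma inU_PsiP (R : realFieldType) (Rl : partition_lab n) (f : 'S_n -> R) :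
  inU Rl (@Psi n) f <->
  (forall h pi : 'S_n, preserves Rl h -> f (h * pi)%g = f pi).
Proof.
split=> [Hf h pi Hh | Hf pi sigma M].
  by apply: Hf => i j; exact: marginal_preserves.
suff Hg : preserves Rl (sigma * pi^-1)%g by rewrite -(Hf _ pi Hg) mulgKV.
move=> s.
have : (0 < marginal Rl (@Psi n) sigma (Rl s) (sigma s))%N.
  by rewrite /marginal card_gt0; apply/set0Pn; exists s; rewrite inE !eqxx.
rewrite -M /marginal card_gt0 => /set0Pn [t]; rewrite inE /Psi.
move=> /andP [/eqP <- /eqP /val_inj pi_t].
by rewrite permM -pi_t permK.
Qed.

Lemma dotS_average (R : realFieldType) (B : {set 'S_n}) (v w : 'S_n -> R) :
  (forall b pi, b \in B -> v (b * pi)%g = v pi) ->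
  dotS v (fun pi => \sum_(b in B) w (b * pi)%g) = #|B|%:R * dotS v w.
Proof.
move=> vB; rewrite /dotS.
under eq_bigr do rewrite mulr_sumr.
rewrite exchange_big /= mulr_natl -sumr_const.
apply: eq_bigr => b bB; rewrite [RHS](reindex_inj (mulgI b)) /=.
by apply: eq_bigr => pi _; rewrite vB.
Qed.

Lemma average_invariant (R : realFieldType) (S : {set 'I_n}) (w : 'S_n -> R) :
  (forall a pi, a \in Sym S -> w (a * pi)%g = w pi) ->
  forall g pi : 'S_n, (forall s, (g s \in S) = (s \in S)) ->
  \sum_(c in Sym (~: S)) w (c * (g * pi))%g = \sum_(c in Sym (~: S)) w (c * pi)%g.
Proof.
move=> wS g pi /perm_split [a aS [b bS ->]].
have commute_a c : c \in Sym (~: S) -> (c * a = a * c)%g.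
  rewrite !inE in aS * => cS; apply: perm_onC cS aS _.
  by rewrite disjoints_subset.
transitivity (\sum_(c in Sym (~: S)) w (c * (b * pi))%g).
  apply: eq_bigr => c cS.
  by rewrite !mulgA commute_a // -!mulgA wS.
rewrite [RHS](reindex_inj (mulIg b)) /=.
apply: eq_big => [c | c _]; last by rewrite mulgA.
by rewrite (groupMr _ bS).
Qed.

End Invariance.

Section SectionSubspaces.
Variable n : nat.

Definition low (k : nat) : {set 'I_n} := [set s : 'I_n | (s < k)%N].

Lemma inUk_invariant (R : realFieldType) k (v : 'S_n -> R) :
  inUk k v -> forall b pi, b \in Sym (~: low k) -> v (b * pi)%g = v pi.
Proof.
move=> /inU_PsiP Uv b pi bB; apply: Uv; apply: Sym_preserves_lab bB.
suff Phi_high s : s \in ~: low k -> @Phi n k s = 2%N.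
  by move=> s t /Phi_high -> /Phi_high ->.
rewrite !inE -leqNgt => ks.
rewrite /Phi ifF; last by rewrite ltnNge leqW.
by rewrite ifF // gtn_eqF.
Qed.

(* For k < l, w in U^l is invariant under the permutations of 1..k, which
   all lie in the first block of Phi_l. *)
Lemma inUk_invariant_low (R : realFieldType) k l (w : 'S_n -> R) :
  (k < l)%N -> inUk l w -> forall a pi, a \in Sym (low k) -> w (a * pi)%g = w pi.
Proof.
move=> kl /inU_PsiP Uw a pi aA; apply: Uw; apply: Sym_preserves_lab aA.
move=> s t; rewrite !inE => ks kt.
by rewrite /Phi !(leq_ltn_trans _ kl).
Qed.

Lemma preserves_Phit k (g : 'S_n) :
  preserves (@Phit n k) g -> forall s, (g s \in low k) = (s \in low k).
Proof. by move=> Hg s; move: (Hg s); rewrite /Phit !inE; do 2 case: ifP. Qed.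

Lemma inF_orthogonal_inUk (R : realFieldType) k l (v w : 'S_n -> R) :
  (k < l)%N -> inF k v -> inUk l w -> dotS v w = 0.
Proof.
move=> kl [Uv Ov] Uw.
pose B := Sym (~: low k).
pose w' pi := \sum_(c in B) w (c * pi)%g.
have Uw' : inUtk k w'.
  apply/inU_PsiP => g pi /preserves_Phit gS; rewrite /w'.
  exact: average_invariant (inUk_invariant_low kl Uw) g pi gS.
have B_nz : (#|B|%:R : R) != 0.
  by rewrite pnatr_eq0 -lt0n card_gt0; apply/set0Pn; exists 1%g; rewrite group1.
have := dotS_average w (inUk_invariant Uv); rewrite Ov //.
by move/esym/eqP; rewrite mulf_eq0 (negbTE B_nz) => /eqP.
Qed.

End SectionSubspaces.

Theorem lemma5 (R : realFieldType) (n : nat) :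
  (forall (k l : nat), (2 <= k <= n)%N -> (2 <= l <= n)%N -> k != l ->
     forall v w : 'S_n -> R, @inF R n k v -> @inF R n l w -> dotS v w = 0) /\
  (forall k : nat, (2 <= k <= n)%N ->
     forall v : 'S_n -> R, @inF R n k v -> dotS v (fun _ => 1) = 0).
Proof.
split=> [k l _ _ kl v w Fv Fw | k _ v [_ Ov]]; last by apply: Ov.
case: (ltngtP k l) => [k_lt_l | l_lt_k | k_eq_l].
- exact: inF_orthogonal_inUk k_lt_l Fv Fw.1.
- rewrite -(inF_orthogonal_inUk l_lt_k Fw Fv.1).
  by apply: eq_bigr => pi _; rewrite mulrC.
- by rewrite k_eq_l eqxx in kl.
Qed.
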